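(* Let $(X,\leq)$ be a continuous dcpo and $p$ a partial metric on $X$ such that $\leq$ coincides with $\leq_p$. Then the following are equivalent: (1) $\mathcal O_p(X)\subseteq\mathcal O_\sigma(X)$; (2) open $p$-balls are finitely accessible, i.e. for every open ball $B^p_\epsilon(x)$ and every $y\in B^p_\epsilon(x)$ there is $y'\ll y$ with $y'\in B^p_\epsilon(x)$; (3) $p$ is Scott-continuous as a map into $([0,+\infty],\geq)$, i.e. for all $x\in X$ and all directed $\Delta\subseteq X$, $p(x,\bigvee\Delta)=\inf_{d\in\Delta}p(x,d)$.
   Context: A partial metric (PM) on $X$ is $p:X\times X\to[0,+\infty]$ with, for all $x,y,z$: $p(x,x)\leq p(x,y)$; if $p(x,x)=p(x,y)=p(y,y)$ then $x=y$; $p(x,y)=p(y,x)$; $p(x,y)\leq p(x,z)+p(z,y)-p(z,z)$. Its order: $x\leq_p y$ iff $p(x,y)\leq p(x,x)$. Open balls $B^p_\epsilon(x)=\{y\mid p(y,x)<p(x,x)+\epsilon\}$; $\mathcal O_p(X)$ is the topology of unions of open balls. In a dcpo, $x\ll y$ iff for every directed $\Delta$ with $y\leq\bigvee\Delta$ there is $d\in\Delta$ with $x\leq d$; a basis is $B\subseteq X$ such that for each $x$ the set $\{y\in B\mid y\ll x\}$ is directed with join $x$; a dcpo is continuous if it has a basis. $\mathcal O_\sigma(X)$ (Scott topology) consists of upper sets $U$ such that $x\in U$ implies $y\in U$ for some $y\ll x$. *)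

From HB Require Import structures.
From mathcomp Require Import all_boot all_order all_algebra.
From mathcomp Require Import all_classical all_reals ereal.
Set Implicit Arguments. Unset Strict Implicit. Unset Printing Implicit Defensive.
Import Order.TTheory GRing.Theory Num.Theory.
Local Open Scope classical_set_scope.
Local Open Scope ring_scope.

Section Defs.
Variables (R : realType) (X : Type).

(* Partial metric p : X * X -> [0, +oo].  The triangle inequality
   p(x,y) <= p(x,z) + p(z,y) - p(z,z) is written without subtraction,
   as p(x,y) + p(z,z) <= p(x,z) + p(z,y). *)
Definition partial_metric (p : X -> X -> \bar R) : Prop :=
  [/\ (forall x y, (0 <= p x y)%E),
      (forall x y, (p x x <= p x y)%E),
      (forall x y, p x x = p x y -> p x y = p y y -> x = y),
      (forall x y, p x y = p y x) &
      (forall x y z, (p x y + p z z <= p x z + p z y)%E)].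

Definition ple (p : X -> X -> \bar R) (x y : X) : Prop := (p x y <= p x x)%E.

Definition pball (p : X -> X -> \bar R) (x : X) (eps : R) : set X :=
  [set y | (p y x < p x x + eps%:E)%E].

Definition p_open (p : X -> X -> \bar R) (U : set X) : Prop :=
  exists F : set (X * R),
    (forall i, F i -> 0 < i.2) /\
    U = \bigcup_(i in F) pball p i.1 i.2.

Variable le : X -> X -> Prop.

Definition directed (D : set X) : Prop :=
  (exists d, D d) /\
  (forall a b, D a -> D b -> exists2 c, D c & le a c /\ le b c).

Definition is_lub (D : set X) (s : X) : Prop :=
  (forall d, D d -> le d s) /\ (forall u, (forall d, D d -> le d u) -> le s u).

Definition dcpo : Prop :=
  [/\ (forall x, le x x),
      (forall x y, le x y -> le y x -> x = y),
      (forall x y z, le x y -> le y z -> le x z) &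
      (forall D, directed D -> exists s, is_lub D s)].

Definition way_below (x y : X) : Prop :=
  forall D s, directed D -> is_lub D s -> le y s -> exists2 d, D d & le x d.

Definition basis (B : set X) : Prop :=
  forall x, directed [set y | B y /\ way_below y x] /\
            is_lub [set y | B y /\ way_below y x] x.

Definition continuous_dcpo : Prop := dcpo /\ exists B, basis B.

Definition upper_set (U : set X) : Prop := forall x y, U x -> le x y -> U y.

Definition scott_open (U : set X) : Prop :=
  upper_set U /\ (forall x, U x -> exists2 y, way_below y x & U y).

End Defs.

(* Since p(z,-) is antitone along <= = <=_p, open balls are upper sets, so a
   p-open set is Scott open exactly when each of its balls is reachable from
   points way below.  A sublevel set {y | p(x,y) < t} with p(x,x) < t is the
   ball around x of radius t - p(x,x); if it contains the join of a directed
   set D, finite accessibility gives y' << \/D in it and hence some d >= y' in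
   D with p(x,d) <= p(x,y') < t, which is Scott continuity.  Conversely, if y
   lies in a ball around x, write y as the directed join of the basis elements
   way below it: the infimum of p(x,-) over them is p(x,y), so one of them
   already lies in the ball. *)
From Pilot Require Import Defs.
From HB Require Import structures.
From mathcomp Require Import all_boot all_order all_algebra.
From mathcomp Require Import all_classical all_reals ereal.
Set Implicit Arguments. Unset Strict Implicit. Unset Printing Implicit Defensive.
Import Order.TTheory GRing.Theory Num.Theory.
Local Open Scope classical_set_scope.
Local Open Scope ring_scope.

Lemma ereal_inf_le_of_lt (R : realType) (S : set (\bar R)) (x : \bar R) :
  (forall t : R, (x < t%:E)%E -> exists2 y, S y & (y < t%:E)%E) ->
  (ereal_inf S <= x)%E.
Proof.
have inf_le t : (exists2 y, S y & (y < t%:E)%E) -> (ereal_inf S <= t%:E)%E.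
  by case=> y Sy /ltW yt; apply: ge_ereal_inf; exists y.
case: x => [r | | ] approx.
- apply/lee_addgt0Pr => e e0; rewrite -EFinD; apply/inf_le/approx.
  by rewrite lte_fin ltrDl.
- exact: leey.
- suff -> : ereal_inf S = -oo%E by [].
  by apply: eq_ninfty => t; apply/inf_le/approx; rewrite ltNyr.
Qed.

Section PartialMetric.
Variables (R : realType) (X : Type) (p : X -> X -> \bar R).
Hypothesis pm : partial_metric p.

(* Cancel p(x,x) = p(x,y) in the triangle inequality through x; when it is
   +oo, so is p(z,x) >= p(x,x). *)
Lemma pmetric_antitone x y z : ple p x y -> (p z y <= p z x)%E.
Proof.
case: pm => p0 pxx _ psym ptri; rewrite /ple => pxy_le.
have pxyE : p x y = p x x by apply/le_anti; rewrite pxy_le pxx.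
have := ptri z y x; rewrite pxyE.
have [pxx_fin | pxx_nfin] := boolP (p x x \is a fin_num).
  by rewrite leeD2rE.
have pxx_inf : p x x = +oo%E by move: pxx_nfin (p0 x x); case: (p x x).
have pzx_inf : p z x = +oo%E.
  by apply/eqP; rewrite -leye_eq -pxx_inf psym pxx.
by rewrite pzx_inf leey.
Qed.

Lemma pball_ple_upper x eps a b :
  ple p a b -> pball p x eps a -> pball p x eps b.
Proof.
case: pm => _ _ _ psym _ /(pmetric_antitone x); rewrite /pball /= !(psym _ x).
exact: le_lt_trans.
Qed.

Lemma p_open_pball x eps : 0 < eps -> p_open p (pball p x eps).
Proof.
move=> eps0; exists [set (x, eps)]; split; first by move=> i ->.
by rewrite bigcup_set1.
Qed.

(* The radius is t - p(x,x), a real number since 0 <= p(x,x) < t. *)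
Lemma sublevel_pball x (t : R) : (p x x < t%:E)%E ->
  exists2 eps, 0 < eps & pball p x eps = [set y | (p x y < t%:E)%E].
Proof.
case: pm => p0 _ _ psym _ pxx_lt.
have pxx_fin : p x x \is a fin_num.
  by rewrite ge0_fin_numE ?p0 // (lt_trans pxx_lt) ?ltry.
exists (t - fine (p x x)); first by rewrite subr_gt0 -lte_fin fineK.
apply/seteqP; split=> y; rewrite /pball /= psym EFinB fineK //;
  by rewrite addrC subeK.
Qed.

End PartialMetric.

Section ScottContinuity.
Variables (R : realType) (X : Type) (le : X -> X -> Prop).
Variable p : X -> X -> \bar R.

Definition p_open_scott_open : Prop :=
  forall U : set X, p_open p U -> scott_open le U.

Definition pballs_finitely_accessible : Prop :=
  forall (x : X) (eps : R), 0 < eps -> forall y, pball p x eps y ->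
    exists2 y', way_below le y' y & pball p x eps y'.

Definition p_scott_continuous : Prop :=
  forall (x : X) (D : set X) (s : X), directed le D -> is_lub le D s ->
    p x s = ereal_inf [set p x d | d in D].

Lemma p_open_scott_open_accessible :
  p_open_scott_open -> pballs_finitely_accessible.
Proof.
by move=> open_scott x eps eps0; case: (open_scott _ (p_open_pball p x eps0)).
Qed.

Hypothesis pm : partial_metric p.
Hypothesis le_ple : forall x y, le x y -> ple p x y.

Lemma accessible_p_open_scott_open :
  pballs_finitely_accessible -> p_open_scott_open.
Proof.
move=> acc U [F [F_pos ->]]; split.
  move=> a b [i Fi a_ball] /le_ple ab; exists i => //.
  exact: pball_ple_upper ab a_ball.
move=> a [i Fi a_ball]; have [y' y'a y'_ball] := acc _ _ (F_pos i Fi) a a_ball.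
by exists y' => //; exists i.
Qed.

Lemma accessible_p_scott_continuous : (forall x, le x x) ->
  pballs_finitely_accessible -> p_scott_continuous.
Proof.
move=> le_refl acc x D s dirD lubD; have [ubD _] := lubD.
apply/le_anti/andP; split.
  by apply/ereal_infP => _ [d Dd <-]; apply/(pmetric_antitone pm)/le_ple/ubD.
apply: ereal_inf_le_of_lt => t pxs_lt.
have pxx_lt : (p x x < t%:E)%E.
  by case: pm => _ pxx _ _ _; apply: le_lt_trans pxs_lt.
have [eps eps0 ballE] := sublevel_pball pm pxx_lt.
have s_ball : pball p x eps s by rewrite ballE.
have [y' y's y'_ball] := acc x eps eps0 s s_ball.
have [d Dd y'd] := y's D s dirD lubD (le_refl s).
exists (p x d); first by exists d.
rewrite ballE /= in y'_ball.
exact: le_lt_trans (pmetric_antitone pm x (le_ple y'd)) y'_ball.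
Qed.

(* Unqualified, [basis] would denote the topological notion of mathcomp. *)
Lemma p_scott_continuous_accessible (B : set X) : Defs.basis le B ->
  p_scott_continuous -> pballs_finitely_accessible.
Proof.
case: pm => _ _ _ psym _ basisB cont x eps _ y y_ball.
have [dir lub] := basisB y.
have : (ereal_inf [set p x d | d in [set d | B d /\ way_below le d y]]
          < p x x + eps%:E)%E by rewrite -(cont x _ y dir lub) psym.
case/ereal_inf_lt => _ [d [_ dy] <-] d_ball; exists d => //.
by rewrite /pball /= psym.
Qed.

End ScottContinuity.

Theorem mainTheorem5 (R : realType) (X : Type) (le : X -> X -> Prop)
  (p : X -> X -> \bar R) :
  continuous_dcpo le ->
  partial_metric p ->
  (forall x y, le x y <-> ple p x y) ->
  [/\ ((forall U : set X, p_open p U -> scott_open le U) <->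
       (forall (x : X) (eps : R), 0 < eps ->
          forall y, pball p x eps y ->
          exists2 y', way_below le y' y & pball p x eps y')),
      ((forall (x : X) (eps : R), 0 < eps ->
          forall y, pball p x eps y ->
          exists2 y', way_below le y' y & pball p x eps y') <->
       (forall (x : X) (D : set X) (s : X), directed le D -> is_lub le D s ->
          p x s = ereal_inf [set p x d | d in D])) &
      ((forall U : set X, p_open p U -> scott_open le U) <->
       (forall (x : X) (D : set X) (s : X), directed le D -> is_lub le D s ->
          p x s = ereal_inf [set p x d | d in D]))].
Proof.
move=> [[le_refl _ _ _] [B basisB]] pm le_pleE.
have le_ple x y : le x y -> ple p x y by move/le_pleE.
have open_accessible :
    p_open_scott_open le p <-> pballs_finitely_accessible le p.
  split; first exact: p_open_scott_open_accessible.
  exact: accessible_p_open_scott_open.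
have accessible_cont :
    pballs_finitely_accessible le p <-> p_scott_continuous le p.
  split; first exact: accessible_p_scott_continuous.
  exact: p_scott_continuous_accessible basisB.
split; [exact: open_accessible | exact: accessible_cont |].
exact: iff_trans open_accessible accessible_cont.
Qed.
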